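(* Let $X\subseteq\mathbb R^n$ be convex and compact, let $\phi_1,\dots,\phi_m:\mathbb R^n\to\mathbb R$ be convex, let $y\in\mathbb R^n$, $\gamma>0$, and consider $$\min_{u\in X}\ \tfrac1{2\gamma}\|u-y\|^2\quad\text{s.t.}\quad\phi_i(u)\le0,\ i=1,\dots,m,$$ with optimal solution $x^*$. Let $x^\circ\in X$ be strictly feasible, i.e., $\phi_i(x^\circ)<0$ for all $i$. Let $\hat x$ be an $\epsilon$-suboptimal and $\epsilon$-infeasible solution, i.e., $\hat x\in X$, $\big|\frac1{2\gamma}\|\hat x-y\|^2-\frac1{2\gamma}\|x^*-y\|^2\big|\le\epsilon$ and $[\phi_i(\hat x)]_+\le\epsilon$ for all $i$. Let $\kappa=\max_i\frac{[\phi_i(\hat x)]_+}{[\phi_i(\hat x)]_+-\phi_i(x^\circ)}$ and $\tilde x=\kappa x^\circ+(1-\kappa)\hat x$. Then $\tilde x$ is feasible for the problem, and $\tilde x$ is an $\mathcal O(\epsilon)$-approximate solution in the sense that, with $h=\mathbb I_\Theta$ and $\Theta=\{x\in X:\phi_i(x)\le0\ \forall i\}$, $$\tfrac1{2\gamma}\|\tilde x-y\|^2+h(\tilde x)\le\rho+\min_{x\in\mathbb R^n}\Big\{\tfrac1{2\gamma}\|x-y\|^2+h(x)\Big\}\quad\text{with }\rho=\mathcal O(\epsilon).$$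
   Context: $[a]_+=\max\{0,a\}$. $\mathbb I_\Theta$ is the indicator function of $\Theta$: $\mathbb I_\Theta(x)=0$ if $x\in\Theta$ and $+\infty$ otherwise. *)

From HB Require Import structures.
From mathcomp Require Import all_boot all_order all_algebra.
From mathcomp Require Import all_classical all_reals all_analysis.
Set Implicit Arguments. Unset Strict Implicit. Unset Printing Implicit Defensive.
Import Order.TTheory GRing.Theory Num.Theory.
Import numFieldNormedType.Exports.
Local Open Scope classical_set_scope.
Local Open Scope ring_scope.

Definition sqdist (R : realType) (n : nat) (u y : 'rV[R]_n) : R :=
  \sum_(i < n) (u ord0 i - y ord0 i) ^+ 2.

Definition convex_fun (R : realType) (n : nat) (f : 'rV[R]_n -> R) : Prop :=
  forall x z t, 0 <= t <= 1 ->
    f (t *: x + (1 - t) *: z) <= t * f x + (1 - t) * f z.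

Definition pos_part (R : realType) (a : R) : R := Num.max 0 a.

Definition feas (R : realType) (n m : nat) (X : set 'rV[R]_n)
  (phi : 'I_m -> 'rV[R]_n -> R) : set 'rV[R]_n :=
  [set x | X x /\ forall i, phi i x <= 0].

Definition ind_Theta (R : realType) (n : nat) (Th : set 'rV[R]_n) (x : 'rV[R]_n)
  : \bar R := if x \in Th then 0%E else +oo%E.

Definition kappa (R : realType) (n m : nat) (phi : 'I_m -> 'rV[R]_n -> R)
  (xh xo : 'rV[R]_n) : R :=
  \big[Num.max/0]_(i < m)
     (pos_part (phi i xh) / (pos_part (phi i xh) - phi i xo)).

From HB Require Import structures.
From mathcomp Require Import all_boot all_order all_algebra.
From mathcomp Require Import all_classical all_reals all_analysis.
From mathcomp Require Import ring lra.
Set Implicit Arguments. Unset Strict Implicit. Unset Printing Implicit Defensive.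
Import Order.TTheory GRing.Theory Num.Theory.
Import numFieldNormedType.Exports.
Local Open Scope classical_set_scope.
Local Open Scope ring_scope.

(* Moving from xh towards the Slater point xo by the fraction k = kappa
   cancels the positive part of every constraint: phi_i is convex and
   phi_i(xo) < 0, so phi_i(k xo + (1-k) xh) <= k phi_i(xo) + (1-k) phi_i(xh),
   which is <= 0 as soon as k >= [phi_i(xh)]_+ / ([phi_i(xh)]_+ - phi_i(xo)).
   Each such ratio is at most eps / (-phi_i(xo)), so k = O(eps), and by
   convexity and nonnegativity of the objective f we get
   f(xt) <= k f(xo) + f(xh) <= f(xstar) + eps + O(eps), while the penalized
   infimum is at least f(xstar). *)

Section Scalar.
Variable R : realType.

Lemma pos_part_ge0 (a : R) : 0 <= pos_part a.
Proof. by rewrite /pos_part le_max lexx. Qed.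

Lemma sqrB_convex (k a b c : R) : 0 <= k <= 1 ->
  (k * a + (1 - k) * b - c) ^+ 2 <= k * (a - c) ^+ 2 + (1 - k) * (b - c) ^+ 2.
Proof.
move=> /andP[k0 k1]; rewrite -subr_ge0.
have -> : k * (a - c) ^+ 2 + (1 - k) * (b - c) ^+ 2 - (k * a + (1 - k) * b - c) ^+ 2
  = k * (1 - k) * (a - b) ^+ 2 by ring.
by rewrite mulr_ge0 ?sqr_ge0 // mulr_ge0 // subr_ge0.
Qed.

Lemma pos_ratio_ge0 (a b : R) : a < 0 -> 0 <= pos_part b / (pos_part b - a).
Proof.
by move=> a0; rewrite divr_ge0 ?addr_ge0 ?pos_part_ge0 // oppr_ge0 ltW.
Qed.

Lemma pos_ratio_le1 (a b : R) : a < 0 -> pos_part b / (pos_part b - a) <= 1.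
Proof.
move=> a0; rewrite ler_pdivrMr ?mul1r ?lerDl ?oppr_ge0 ?ltW //.
by rewrite subr_gt0 (lt_le_trans a0) ?pos_part_ge0.
Qed.

Lemma pos_ratio_le (a b : R) : a < 0 ->
  pos_part b / (pos_part b - a) <= pos_part b * (- a)^-1.
Proof.
move=> a0; apply: ler_wpM2l; first exact: pos_part_ge0.
by rewrite lef_pV2 ?posrE ?lerDr ?pos_part_ge0 ?oppr_gt0 ?subr_gt0
  ?(lt_le_trans a0) ?pos_part_ge0.
Qed.

Lemma convex_comb_le0 (k a b : R) : a < 0 -> k <= 1 ->
  pos_part b / (pos_part b - a) <= k -> k * a + (1 - k) * b <= 0.
Proof.
move=> a0 k1 hk; have [b0|b0] := leP b 0.
  have k0 : 0 <= k := le_trans (pos_ratio_ge0 b a0) hk.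
  by rewrite -oppr_ge0 opprD -!mulrN addr_ge0 ?mulr_ge0 ?subr_ge0 ?oppr_ge0 // ltW.
have pb : pos_part b = b by rewrite /pos_part max_r ?ltW.
move: hk; rewrite pb ler_pdivrMr ?subr_gt0 ?(lt_trans a0) // => hk.
have -> : k * a + (1 - k) * b = b - k * (b - a) by ring.
by rewrite subr_le0.
Qed.

End Scalar.

Section Kappa.
Variables (R : realType) (n m : nat) (phi : 'I_m -> 'rV[R]_n -> R).
Variables (xh xo : 'rV[R]_n).
Hypothesis phi_xo_lt0 : forall i, phi i xo < 0.

Lemma kappa_ge0 : 0 <= kappa phi xh xo.
Proof.
rewrite /kappa; apply: (big_ind (fun x => 0 <= x)) => // [a b a0 _|i _].
  by rewrite le_max a0.
exact: pos_ratio_ge0.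
Qed.

Lemma kappa_le1 : kappa phi xh xo <= 1.
Proof.
rewrite /kappa; apply: (big_ind (fun x => x <= 1)) => // [a b a1 b1|i _].
  by rewrite ge_max a1 b1.
exact: pos_ratio_le1.
Qed.

Lemma pos_ratio_le_kappa i :
  pos_part (phi i xh) / (pos_part (phi i xh) - phi i xo) <= kappa phi xh xo.
Proof. by rewrite /kappa (bigD1 i) //= le_max lexx. Qed.

Lemma kappa_le_sum (eps : R) : 0 <= eps ->
  (forall i, pos_part (phi i xh) <= eps) ->
  kappa phi xh xo <= eps * \sum_(i < m) (- phi i xo)^-1.
Proof.
move=> eps0 hxh; have inv_ge0 i : 0 <= (- phi i xo)^-1.
  by rewrite invr_ge0 oppr_ge0 ltW.
rewrite /kappa; apply: (big_ind (fun x => x <= _)).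
- by rewrite mulr_ge0 ?sumr_ge0.
- by move=> a b ha hb; rewrite ge_max ha hb.
move=> i _; apply: (le_trans (pos_ratio_le _ (phi_xo_lt0 i))).
apply: ler_pM => //; first exact: pos_part_ge0.
by rewrite (bigD1 i) //= lerDl sumr_ge0.
Qed.

Lemma feas_kappa_comb (X : set 'rV[R]_n) :
  convex_set X -> (forall i, convex_fun (phi i)) -> X xo -> X xh ->
  feas X phi (kappa phi xh xo *: xo + (1 - kappa phi xh xo) *: xh).
Proof.
move=> cX cphi Xo Xh; have k0 := kappa_ge0; have k1 := kappa_le1.
split; first by have := cX xo xh (Itv01 k0 k1); rewrite !inE; apply.
move=> i; apply: le_trans (cphi i _ _ _ _) _; first by rewrite k0 k1.
exact: convex_comb_le0 (phi_xo_lt0 i) k1 (pos_ratio_le_kappa i).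
Qed.

End Kappa.

Section Objective.
Variables (R : realType) (n : nat).

Lemma sqdist_ge0 (u y : 'rV[R]_n) : 0 <= sqdist u y.
Proof. by rewrite /sqdist sumr_ge0 // => j _; rewrite sqr_ge0. Qed.

Lemma convex_fun_sqdist (y : 'rV[R]_n) : convex_fun (fun u => sqdist u y).
Proof.
move=> u v k hk; rewrite /sqdist !mulr_sumr -big_split /=.
by apply: ler_sum => j _; rewrite !mxE; apply: sqrB_convex.
Qed.

Lemma convex_funMr (f : 'rV[R]_n -> R) (c : R) : 0 <= c ->
  convex_fun f -> convex_fun (fun u => f u * c).
Proof.
move=> c0 cf u v k hk; rewrite mulrA (mulrA (1 - k)) -mulrDl.
exact: ler_wpM2r (cf u v k hk).
Qed.

Lemma convex_fun_comb_le (f : 'rV[R]_n -> R) (k : R) (u v : 'rV[R]_n) :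
  convex_fun f -> 0 <= k <= 1 -> 0 <= f v ->
  f (k *: u + (1 - k) *: v) <= k * f u + f v.
Proof.
move=> cf /andP[k0 k1] fv0; apply: le_trans (cf u v k _) _; first by rewrite k0 k1.
by rewrite lerD2l ler_piMl // gerBl.
Qed.

Lemma ereal_inf_penalized_ge (f : 'rV[R]_n -> R) (Th : set 'rV[R]_n)
    (xstar : 'rV[R]_n) :
  (forall u, Th u -> f xstar <= f u) ->
  ((f xstar)%:E <= ereal_inf [set (f x)%:E + ind_Theta Th x | x in [set: 'rV[R]_n]])%E.
Proof.
move=> fmin; apply: le_ereal_inf_tmp => _ [x _ <-]; rewrite /ind_Theta.
case: ifPn => [/set_mem Thx|_]; last by rewrite addey // leey.
by rewrite adde0 lee_fin fmin.
Qed.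

End Objective.

Theorem lemma5 (R : realType) (n m : nat) (X : set 'rV[R]_n)
  (phi : 'I_m -> 'rV[R]_n -> R) (y : 'rV[R]_n) (gamma : R)
  (xstar xo : 'rV[R]_n) :
  convex_set X -> compact X ->
  (forall i, convex_fun (phi i)) ->
  0 < gamma ->
  feas X phi xstar ->
  (forall u, feas X phi u ->
     sqdist xstar y / (2 * gamma) <= sqdist u y / (2 * gamma)) ->
  X xo -> (forall i, phi i xo < 0) ->
  exists C : R, 0 <= C /\
  forall (eps : R) (xh : 'rV[R]_n), 0 < eps ->
    X xh ->
    `| sqdist xh y / (2 * gamma) - sqdist xstar y / (2 * gamma) | <= eps ->
    (forall i, pos_part (phi i xh) <= eps) ->
    let k := kappa phi xh xo in
    let xt := k *: xo + (1 - k) *: xh in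
    feas X phi xt /\
    ((sqdist xt y / (2 * gamma))%:E + ind_Theta (feas X phi) xt <=
      (C * eps)%:E +
      ereal_inf [set (sqdist x y / (2 * gamma))%:E + ind_Theta (feas X phi) x
                | x in [set: 'rV[R]_n]])%E.
Proof.
(* Compactness of X only serves to guarantee that xstar exists. *)
move=> cX _ cphi g0 _ xstar_min Xo phio.
set f := fun u => sqdist u y / (2 * gamma).
have f0 u : 0 <= f u by rewrite divr_ge0 ?sqdist_ge0 // mulr_ge0 // ltW.
have cf : convex_fun f.
  by apply: convex_funMr (convex_fun_sqdist y); rewrite invr_ge0 mulr_ge0 // ltW.
set M := \sum_(i < m) (- phi i xo)^-1.
have M0 : 0 <= M by rewrite sumr_ge0 // => i _; rewrite invr_ge0 oppr_ge0 ltW.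
exists (1 + f xo * M); split; first by rewrite addr_ge0 // mulr_ge0.
move=> eps xh eps0 Xh fxh_near phixh k xt.
have Ft : feas X phi xt by apply: feas_kappa_comb.
split=> //; rewrite /ind_Theta mem_set // adde0.
apply: le_trans (leeD (lexx _) (ereal_inf_penalized_ge xstar_min)).
rewrite -EFinD lee_fin.
have fxt : f xt <= k * f xo + f xh.
  by apply: convex_fun_comb_le; rewrite ?kappa_ge0 ?kappa_le1.
have keps : k * f xo <= eps * M * f xo.
  by apply: ler_wpM2r => //; apply: kappa_le_sum => //; apply: ltW.
have fxh : f xh <= f xstar + eps.
  by rewrite -lerBlDl (le_trans (ler_norm _)).
change (f xt <= (1 + f xo * M) * eps + f xstar).
have -> : (1 + f xo * M) * eps = eps + eps * M * f xo by ring.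
lra.
Qed.
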